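(* For any number of features $D$, $Z_1(\boldsymbol\lambda)>1$ for every feasible $\boldsymbol\lambda$ in the positive regions $P=\mathbb R^D_{++}\cup(-\mathbb R^D_{++})$, where $$Z_1(\boldsymbol\lambda)=\pi_1^*\prod_{i=1}^D(1+\pi_2^*\lambda_i)+\pi_2^*\prod_{i=1}^D(1-\pi_1^*\lambda_i).$$
   Context: Setting: a mixture of two Bernoullis on $\{0,1\}^D$. - The true distribution is $p^*(\mathbf x)=\pi_1^*B(\mathbf x\mid\boldsymbol\mu_1^* )+\pi_2^*B(\mathbf x\mid\boldsymbol\mu_2^* )$, where $B(\mathbf x\mid\boldsymbol\mu)=\prod_i\mu_i^{x_i}(1-\mu_i)^{1-x_i}$, $\pi_1^*\in(0,1)$ and $\pi_2^*=1-\pi_1^*$. - Let $\overline{\mathbf x}=\mathbb E_{p^*}[\mathbf x]$, $S_i=\overline x_i(1-\overline x_i)$ and $\boldsymbol\mu^*=(\boldsymbol\mu_1^*-\boldsymbol\mu_2^* )/2$. - For a model component mean $\boldsymbol\mu_1\in[0,1]^D$, set $\mathbf b=\boldsymbol\mu_1-\overline{\mathbf x}$ and $\lambda_i=2S_i^{-1}\mu_i^*b_i$. - The feasible domain of $\boldsymbol\lambda$ is the image of $[0,1]^D$ under this affine map. On it, $1+\pi_2^*\lambda_i\ge0$ and $1-\pi_1^*\lambda_i\ge0$. - $Z_1(\boldsymbol\lambda)$ is the leading-order (small $\pi_1$, $\boldsymbol\mu_2=\overline{\mathbf x}$) factor by which EM multiplies $\pi_1$. - $\mathbb R^D_{++}$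 denotes vectors with all coordinates strictly positive. *)

From mathcomp Require Import all_boot all_order all_algebra.
Set Implicit Arguments. Unset Strict Implicit. Unset Printing Implicit Defensive.
Import Order.TTheory GRing.Theory Num.Theory.
Local Open Scope ring_scope.

Section Defs.
Variables (R : realFieldType) (D : nat).

(* mean of the true mixture: xbar = pi1s mu1s + pi2s mu2s, pi2s = 1 - pi1s *)
Definition xbar (pi1 : R) (mu1s mu2s : 'I_D -> R) (i : 'I_D) : R :=
  pi1 * mu1s i + (1 - pi1) * mu2s i.

Definition Svar (pi1 : R) (mu1s mu2s : 'I_D -> R) (i : 'I_D) : R :=
  xbar pi1 mu1s mu2s i * (1 - xbar pi1 mu1s mu2s i).

Definition mustar (mu1s mu2s : 'I_D -> R) (i : 'I_D) : R :=
  (mu1s i - mu2s i) / 2.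

Definition lam (pi1 : R) (mu1s mu2s mu1 : 'I_D -> R) (i : 'I_D) : R :=
  2 * (Svar pi1 mu1s mu2s i)^-1 * mustar mu1s mu2s i
    * (mu1 i - xbar pi1 mu1s mu2s i).

Definition Z1 (pi1 : R) (l : 'I_D -> R) : R :=
  pi1 * \prod_(i < D) (1 + (1 - pi1) * l i)
  + (1 - pi1) * \prod_(i < D) (1 - pi1 * l i).

End Defs.

(** Peeling off the first coordinate changes [Z1] by
    [pi1 pi2 lambda_0 (A - B)], where [A = prod (1 + pi2 lambda_i)] and
    [B = prod (1 - pi1 lambda_i)] run over the remaining coordinates.  In the
    positive region each factor of [B] is nonnegative and smaller than the
    matching factor of [A], so the increment is positive once a coordinate
    remains; since [Z1 = 1] in dimension zero, [Z1 > 1] for [D >= 2].  The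
    map [(pi1, lambda) |-> (pi2, -lambda)] leaves [Z1] unchanged and swaps the
    two regions.  Feasibility holds because
    [S_i + (y - xbar_i)(m - xbar_i) = (1 - m) xbar_i (1 - y) + m (1 - xbar_i) y]. *)
From mathcomp Require Import all_boot all_order all_algebra.
From mathcomp Require Import ring lra.
Set Implicit Arguments. Unset Strict Implicit. Unset Printing Implicit Defensive.
Import Order.TTheory GRing.Theory Num.Theory.
Local Open Scope ring_scope.

Lemma var_add_mul_sub_ge0 (R : realDomainType) (x y m : R) :
  0 <= x <= 1 -> 0 <= y <= 1 -> 0 <= m <= 1 ->
  0 <= x * (1 - x) + (y - x) * (m - x).
Proof.
move=> /andP[x0 x1] /andP[y0 y1] /andP[m0 m1].
have -> : x * (1 - x) + (y - x) * (m - x)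
          = (1 - m) * x * (1 - y) + m * (1 - x) * y by ring.
by apply: addr_ge0; rewrite !mulr_ge0 ?subr_ge0.
Qed.

(* [S = 0] is allowed: then [S^-1 = 0], which is how [lam] reads when [S_i = 0]. *)
Lemma add1_invrM_ge0 (R : realFieldType) (S t : R) :
  0 <= S -> 0 <= S + t -> 0 <= 1 + S^-1 * t.
Proof.
rewrite le0r => /orP[/eqP-> _ | S0 St]; first by rewrite invr0 mul0r addr0.
have -> : 1 + S^-1 * t = (S + t) / S by field; rewrite gt_eqF.
exact: divr_ge0 St (ltW S0).
Qed.

Section Feasibility.
Variables (R : realFieldType) (D : nat) (pi1 : R) (mu1s mu2s mu1 : 'I_D -> R).
Hypothesis hpi1 : 0 <= pi1 <= 1.
Hypotheses (hmu1s : forall i, 0 <= mu1s i <= 1)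
           (hmu2s : forall i, 0 <= mu2s i <= 1).
Hypothesis hmu1 : forall i, 0 <= mu1 i <= 1.

Lemma xbar_ge0_le1 i : 0 <= xbar pi1 mu1s mu2s i <= 1.
Proof.
move: hpi1 (hmu1s i) (hmu2s i) => /andP[? ?] /andP[? ?] /andP[? ?].
by rewrite /xbar; apply/andP; split; nra.
Qed.

Lemma lamE i : lam pi1 mu1s mu2s mu1 i = (Svar pi1 mu1s mu2s i)^-1
  * ((mu1s i - mu2s i) * (mu1 i - xbar pi1 mu1s mu2s i)).
Proof. by rewrite /lam /mustar; move: (Svar _ _ _ _)^-1 => s; field. Qed.

Lemma lam_feasible i :
  0 <= 1 + (1 - pi1) * lam pi1 mu1s mu2s mu1 i /\
  0 <= 1 - pi1 * lam pi1 mu1s mu2s mu1 i.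
Proof.
have S0 : 0 <= Svar pi1 mu1s mu2s i.
  by have /andP[? ?] := xbar_ge0_le1 i; rewrite mulr_ge0 ?subr_ge0.
rewrite lamE; set x := xbar pi1 mu1s mu2s i; set s := _^-1.
(* [pi2 (mu1s - mu2s) = mu1s - xbar] and [- pi1 (mu1s - mu2s) = mu2s - xbar] *)
have -> : (1 - pi1) * (s * ((mu1s i - mu2s i) * (mu1 i - x)))
          = s * ((mu1s i - x) * (mu1 i - x)) by rewrite /x /xbar; ring.
have -> : 1 - pi1 * (s * ((mu1s i - mu2s i) * (mu1 i - x)))
          = 1 + s * ((mu2s i - x) * (mu1 i - x)) by rewrite /x /xbar; ring.
by split; apply: add1_invrM_ge0 S0 _; rewrite var_add_mul_sub_ge0 ?xbar_ge0_le1.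
Qed.

End Feasibility.

Section PositiveRegion.
Variables (R : realFieldType) (p : R).
Hypothesis hp : 0 < p < 1.

Lemma Z1_recl n (l : 'I_n.+1 -> R) :
  Z1 p l = Z1 p (fun i => l (lift ord0 i)) + p * (1 - p) * l ord0 *
    (\prod_(i < n) (1 + (1 - p) * l (lift ord0 i))
     - \prod_(i < n) (1 - p * l (lift ord0 i))).
Proof. by rewrite /Z1 !big_ord_recl; ring. Qed.

Lemma factor_down_lt_up (x : R) : 0 < x -> 1 - p * x < 1 + (1 - p) * x.
Proof. by move=> x0; rewrite mulrBl mul1r addrA ltrD2r ltrDl. Qed.

Lemma prod_down_le_up n (l : 'I_n -> R) :
  (forall i, 0 < l i) -> (forall i, 0 <= 1 - p * l i) ->
  \prod_(i < n) (1 - p * l i) <= \prod_(i < n) (1 + (1 - p) * l i).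
Proof.
move=> lpos lfeas; apply: ler_prod => i _.
by rewrite lfeas ltW ?factor_down_lt_up.
Qed.

Lemma prod_down_lt_up n (l : 'I_n -> R) : (0 < n)%N ->
  (forall i, 0 < l i) -> (forall i, 0 <= 1 - p * l i) ->
  \prod_(i < n) (1 - p * l i) < \prod_(i < n) (1 + (1 - p) * l i).
Proof.
move=> n0 lpos lfeas; apply: ltr_prod => [|i _]; last first.
  by rewrite lfeas factor_down_lt_up.
by apply/hasP; exists (Ordinal n0); rewrite ?mem_index_enum.
Qed.

Lemma Z1_ge1_pos n (l : 'I_n -> R) :
  (forall i, 0 < l i) -> (forall i, 0 <= 1 - p * l i) -> 1 <= Z1 p l.
Proof.
have [p0 p1] := andP hp.
elim: n l => [|n IH] l lpos lfeas; first by rewrite /Z1 !big_ord0; lra.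
have IHl := IH (fun i => l (lift ord0 i)) (fun i => lpos _) (fun i => lfeas _).
rewrite Z1_recl; apply: le_trans IHl _.
rewrite lerDl mulr_ge0 ?subr_ge0 ?prod_down_le_up // ltW //.
by rewrite !mulr_gt0 ?subr_gt0.
Qed.

Lemma Z1_gt1_pos n (l : 'I_n -> R) : (2 <= n)%N ->
  (forall i, 0 < l i) -> (forall i, 0 <= 1 - p * l i) -> 1 < Z1 p l.
Proof.
have [p0 p1] := andP hp.
case: n l => [|[|n]] // l _ lpos lfeas.
have Z1_tail := Z1_ge1_pos (l := fun i => l (lift ord0 i))
  (fun i => lpos _) (fun i => lfeas _).
rewrite Z1_recl; apply: le_lt_trans Z1_tail _.
by rewrite ltrDl !mulr_gt0 ?subr_gt0 ?prod_down_lt_up.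
Qed.

End PositiveRegion.

Lemma Z1_swap (R : realFieldType) (D : nat) (p : R) (l : 'I_D -> R) :
  Z1 p l = Z1 (1 - p) (fun i => - l i).
Proof.
rewrite /Z1 [RHS]addrC (_ : 1 - (1 - p) = p); last by ring.
congr (_ * _ + _ * _).
  by apply: eq_bigr => i _; rewrite mulrN opprK.
by apply: eq_bigr => i _; rewrite mulrN.
Qed.

Lemma Z1_gt1 (R : realFieldType) (D : nat) (p : R) (l : 'I_D -> R) :
  (2 <= D)%N -> 0 < p < 1 ->
  (forall i, 0 <= 1 + (1 - p) * l i /\ 0 <= 1 - p * l i) ->
  (forall i, 0 < l i) \/ (forall i, l i < 0) -> 1 < Z1 p l.
Proof.
move=> hD hp feas [lpos | lneg]; first exact: Z1_gt1_pos (fun i => (feas i).2).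
have hq : 0 < 1 - p < 1 by case/andP: hp => p0 p1; apply/andP; split; lra.
rewrite Z1_swap; apply: Z1_gt1_pos => // i; first by rewrite oppr_gt0.
by rewrite mulrN opprK; exact: (feas i).1.
Qed.

Theorem mainTheorem5 (R : realFieldType) (D : nat) (hD : (2 <= D)%N)
  (pi1 : R) (hpi1 : 0 < pi1 < 1)
  (mu1s mu2s : 'I_D -> R)
  (hmu1s : forall i, 0 <= mu1s i <= 1) (hmu2s : forall i, 0 <= mu2s i <= 1)
  (mu1 : 'I_D -> R) (hmu1 : forall i, 0 <= mu1 i <= 1)
  (hP : (forall i, 0 < lam pi1 mu1s mu2s mu1 i) \/
        (forall i, lam pi1 mu1s mu2s mu1 i < 0)) :
  1 < Z1 pi1 (lam pi1 mu1s mu2s mu1).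
Proof.
apply: Z1_gt1 => // i; apply: lam_feasible => //.
by case/andP: hpi1 => p0 p1; rewrite !ltW.
Qed.
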